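(* If TDS is undecidable, then the $<$-universality problem and the $<$-inclusion problem of discounted-sum automata over infinite words are undecidable.
   Context: An instance of TDS consists of a rational discount factor $0<\lambda<1$, a rational target $t$, and rational weights $a,b$; it asks whether there exists $w\in\{a,b\}^\omega$ with $\sum_{i=0}^\infty w(i)\lambda^i=t$. A discounted-sum automaton (DSA) over infinite words is a tuple $\langle\Sigma,Q,q_{in},\delta,\gamma,\lambda\rangle$ with finite alphabet $\Sigma$, finite state set $Q$, initial state $q_{in}$, transition relation $\delta\subseteq Q\times\Sigma\times Q$, weight function $\gamma:\delta\to\mathbb Q$ and rational discount factor $0<\lambda<1$. A run on an infinite word $\sigma_1\sigma_2\cdots$ is $q_0,\sigma_1,q_1,\sigma_2,\dots$ with $q_0=q_{in}$ and $(q_i,\sigma_{i+1},q_{i+1})\in\delta$; every infinite run is accepting; its value is $\sum_{i=0}^\infty\lambda^i\gamma(q_i,\sigma_{i+1},q_{i+1})$, and $\mathcal A(w)$ is the infimum of the values of runs on $w$. The $<$-universality problem asks, given $\mathcal A$ and $t\in\mathbb Q$, whether $\mathcal A(w)<t$ for every infinite word $w$; the $<$-inclusion problem asks, given $\mathcal A,\mathcal B$, whether $\mathcal A(w)<\mathcal B(w)$ for every infinite word $w$. *)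

From Stdlib Require Import Arith List ZArith QArith Reals.
From Coquelicot Require Import Coquelicot.
Import ListNotations.

(* A concrete model of computation: Kleene's partial recursive        *)
(* functions on nat (untyped, arguments given as a list of nat).      *)

Inductive recf : Type :=
| RZero : recf
| RSucc : recf
| RProj : nat -> recf
| RComp : recf -> list recf -> recf
| RPrim : recf -> recf -> recf
| RMu   : recf -> recf.

Inductive reval : recf -> list nat -> nat -> Prop :=
| ev_zero xs : reval RZero xs 0
| ev_succ x xs : reval RSucc (x :: xs) (S x)
| ev_proj i xs : (i < length xs)%nat -> reval (RProj i) xs (nth i xs 0%nat)
| ev_comp f gs xs vs y :
    List.Forall2 (fun g v => reval g xs v) gs vs -> reval f vs y ->
    reval (RComp f gs) xs y
| ev_prim0 f g xs y : reval f xs y -> reval (RPrim f g) (0%nat :: xs) y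
| ev_primS f g n xs y z :
    reval (RPrim f g) (n :: xs) y -> reval g (n :: y :: xs) z ->
    reval (RPrim f g) (S n :: xs) z
| ev_mu f xs n :
    reval f (n :: xs) 0 ->
    (forall m, (m < n)%nat -> exists k, reval f (m :: xs) (S k)) ->
    reval (RMu f) xs n.

(* A problem [P] on instances of type [X], presented through a fixed
   (computable, surjective) decoding [dec : nat -> X] of instances from
   natural-number codes, restricted to the well-formed instances [Dom],
   is decidable iff some partial recursive function halts on every code
   of a well-formed instance with output 1 on yes-instances and 0 on
   no-instances. *)
Definition decidable_on {X : Type} (dec : nat -> X) (Dom P : X -> Prop) : Prop :=
  exists f : recf, forall n, Dom (dec n) ->
    (P (dec n) -> reval f [n] 1) /\ (~ P (dec n) -> reval f [n] 0).

(* inverse of the Cantor pairing function *)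
Definition unpair (n : nat) : nat * nat :=
  let w := ((Nat.sqrt (8 * n + 1) - 1) / 2)%nat in
  let t := (w * (w + 1) / 2)%nat in
  ((w - (n - t))%nat, (n - t)%nat).

Definition decZ (n : nat) : Z :=
  if Nat.even n then Z.of_nat (n / 2) else (- Z.of_nat ((n + 1) / 2))%Z.

Definition decQ (n : nat) : Q :=
  let (a, b) := unpair n in Qmake (decZ a) (Pos.of_succ_nat b).

Fixpoint decList_fuel {A : Type} (d : nat -> A) (fuel n : nat) : list A :=
  match fuel with
  | O => []
  | S f => match n with
           | O => []
           | S m => let (a, b) := unpair m in d a :: decList_fuel d f b
           end
  end.

Definition decList {A : Type} (d : nat -> A) (n : nat) : list A :=
  decList_fuel d n n.

Definition TDS_inst : Type := (Q * Q * Q * Q)%type.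

Definition decTDS (n : nat) : TDS_inst :=
  let (x, y) := unpair n in
  let (p, q) := unpair x in
  let (r, s) := unpair y in
  (decQ p, decQ q, decQ r, decQ s).

Definition TDS_dom (I : TDS_inst) : Prop :=
  let '(lam, t, a, b) := I in (0 < Q2R lam < 1)%R.

(* exists w in {a,b}^omega with sum_i w(i) lam^i = t;
   the infinite word is given by a choice sequence (true = a, false = b) *)
Definition TDS (I : TDS_inst) : Prop :=
  let '(lam, t, a, b) := I in
  exists c : nat -> bool,
    is_series (fun i => (Q2R (if c i then a else b) * Q2R lam ^ i)%R) (Q2R t).

(* alphabet {0,..,nsym-1}, states {0,..,nst-1}, initial state init,
   transitions (p, sigma, q, gamma(p,sigma,q)), discount factor disc *)
Record DSA : Type := mkDSA {
  nsym : nat;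
  nst : nat;
  init : nat;
  trans : list (nat * nat * nat * Q)%type;
  disc : Q
}.

Definition DSA_wf (A : DSA) : Prop :=
  (init A < nst A)%nat /\
  List.Forall (fun e : (nat * nat * nat * Q)%type =>
            let '(p, s, q, _) := e in
            (p < nst A)%nat /\ (s < nsym A)%nat /\ (q < nst A)%nat) (trans A) /\
  (* gamma is a function on the transition relation *)
  NoDup (map (fun e : (nat * nat * nat * Q)%type => let '(p, s, q, _) := e in (p, s, q))
             (trans A)) /\
  (0 < Q2R (disc A) < 1)%R.

Definition decDSA (n : nat) : DSA :=
  let (x, y) := unpair n in
  let (k, m) := unpair x in
  let (i, z) := unpair y in
  let (tr, l) := unpair z in
  mkDSA k m i
    (decList (fun c => let (u, v) := unpair c in
                       let (p, s) := unpair u in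
                       let (q, g) := unpair v in (p, s, q, decQ g)) tr)
    (decQ l).

Definition is_word (k : nat) (w : nat -> nat) : Prop := forall i, (w i < k)%nat.

(* values of the (all accepting) infinite runs of A on w:
   a run is a state sequence r with r 0 = init; g i is the weight of its
   i-th transition *)
Definition run_values (A : DSA) (w : nat -> nat) (v : R) : Prop :=
  exists (r : nat -> nat) (g : nat -> Q),
    r 0%nat = init A /\
    (forall i, In (r i, w i, r (S i), g i) (trans A)) /\
    is_series (fun i => (Q2R (g i) * Q2R (disc A) ^ i)%R) v.

(* A(w) = infimum of the values of the runs on w (+oo if there is none) *)
Definition DSA_value (A : DSA) (w : nat -> nat) : Rbar :=
  Glb_Rbar (run_values A w).

Definition univ_inst : Type := (DSA * Q)%type.
Definition decUniv (n : nat) : univ_inst :=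
  let (x, y) := unpair n in (decDSA x, decQ y).
Definition univ_dom (I : univ_inst) : Prop := DSA_wf (fst I).
Definition lt_universal (I : univ_inst) : Prop :=
  let (A, t) := I in
  forall w, is_word (nsym A) w -> Rbar_lt (DSA_value A w) (Finite (Q2R t)).

Definition incl_inst : Type := (DSA * DSA)%type.
Definition decIncl (n : nat) : incl_inst :=
  let (x, y) := unpair n in (decDSA x, decDSA y).
Definition incl_dom (I : incl_inst) : Prop :=
  DSA_wf (fst I) /\ DSA_wf (snd I) /\ nsym (fst I) = nsym (snd I).
Definition lt_inclusion (I : incl_inst) : Prop :=
  let (A, B) := I in
  forall w, is_word (nsym A) w -> Rbar_lt (DSA_value A w) (DSA_value B w).

(* Given a TDS instance (lam, t, a, b), let A be the automaton over {0, 1} that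
   guesses one of two branches in its first step and then stays in it, writing
   w_0 = a and w_1 = b: branch 1 reads letter s with weight w_s - t in the first
   step and w_s afterwards, branch 2 with weight t - w_s and then -w_s.  On a word
   with discounted sum v = sum_i w(i) lam^i its two runs are worth v - t and
   t - v, so A(w) = -|v - t|, which is negative exactly when v <> t.  Hence (A, 0)
   is <-universal, and A is <-included in the automaton with constant weight 0,
   iff the TDS instance has no solution.  Both instances are computed from the
   code of the TDS instance by a partial recursive function, so a decider for
   either problem, composed with it and with y |-> 1 - y, would decide TDS. *)

From Stdlib Require Import Arith List ZArith QArith Qreals Reals Lia Lra.
From Coquelicot Require Import Coquelicot.
Import ListNotations.

(** * Two-branch discounted-sum automata *)

Lemma Glb_Rbar_pair (E : R -> Prop) a b :
  (forall x, E x <-> x = a \/ x = b) -> Glb_Rbar E = Finite (Rmin a b).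
Proof.
  intro HE. apply is_glb_Rbar_unique. split.
  - intros x Hx. apply HE in Hx. destruct Hx as [->| ->]; [apply Rmin_l|apply Rmin_r].
  - intros c Hc. apply Hc, HE. unfold Rmin. destruct Rle_dec; auto.
Qed.

Lemma is_series_change_head (u c : nat -> R) (v : R) :
  is_series u v -> (forall k, c (S k) = u (S k)) -> is_series c (v - u 0%nat + c 0%nat).
Proof.
  intros Hu Htail. apply is_series_decr_1.
  apply (is_series_ext (fun k => u (S k))); [intro k; symmetry; apply Htail|].
  apply is_series_incr_1.
  change (is_series u (v - u 0%nat + c 0%nat + - c 0%nat + u 0%nat)).
  replace (v - u 0%nat + c 0%nat + - c 0%nat + u 0%nat) with v by ring. exact Hu.
Qed.

Definition letter_weight (e : Q * Q) (s : nat) : Q := if s =? 0 then fst e else snd e.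

(* From the initial state 0 the automaton enters branch 1 (state 1) or branch 2
   (state 2) and stays there; [e_j] and [l_j] give the weights of letters 0 and 1
   on entering and on looping in branch j. *)
Definition two_branch_dsa (lam : Q) (e1 l1 e2 l2 : Q * Q) : DSA :=
  mkDSA 2 3 0
    [(0, 0, 1, fst e1); (0, 1, 1, snd e1); (1, 0, 1, fst l1); (1, 1, 1, snd l1);
     (0, 0, 2, fst e2); (0, 1, 2, snd e2); (2, 0, 2, fst l2); (2, 1, 2, snd l2)]%nat lam.

Lemma two_branch_dsa_wf lam e1 l1 e2 l2 :
  0 < Q2R lam < 1 -> DSA_wf (two_branch_dsa lam e1 l1 e2 l2).
Proof.
  intro Hlam. split; [simpl; lia|split; [|split; [|exact Hlam]]].
  - simpl. repeat constructor; lia.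
  - simpl. repeat constructor; simpl; intro H; repeat destruct H as [H|H]; easy.
Qed.

Lemma in_two_branch_trans lam e1 l1 e2 l2 p s q g :
  In (p, s, q, g) (trans (two_branch_dsa lam e1 l1 e2 l2)) ->
  (p = 0 /\ q = 1 /\ g = letter_weight e1 s \/ p = 0 /\ q = 2 /\ g = letter_weight e2 s \/
   p = 1 /\ q = 1 /\ g = letter_weight l1 s \/ p = 2 /\ q = 2 /\ g = letter_weight l2 s)%nat.
Proof.
  simpl. intro H.
  repeat (destruct H as [H|H]; [injection H as <- <- <- <-; unfold letter_weight; simpl; tauto|]).
  contradiction.
Qed.

Definition branch_weights (e l : Q * Q) (w : nat -> nat) (i : nat) : Q :=
  letter_weight (match i with O => e | S _ => l end) (w i).

Definition discounted (lam : Q) (g : nat -> Q) (i : nat) : R := Q2R (g i) * Q2R lam ^ i.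

Lemma run_values_two_branch lam e1 l1 e2 l2 w x : is_word 2 w ->
  run_values (two_branch_dsa lam e1 l1 e2 l2) w x <->
  is_series (discounted lam (branch_weights e1 l1 w)) x \/
  is_series (discounted lam (branch_weights e2 l2 w)) x.
Proof.
  intro Hw. split.
  - intros (r & g & Hr0 & Htr & Hs). simpl in Hr0, Hs.
    pose proof (fun i => in_two_branch_trans _ _ _ _ _ _ _ _ _ (Htr i)) as Hstep.
    assert (Hbranch : forall i,
      (r 1 = 1 -> r (S i) = 1 /\ g i = branch_weights e1 l1 w i)%nat /\
      (r 1 = 2 -> r (S i) = 2 /\ g i = branch_weights e2 l2 w i)%nat).
    { induction i as [|i [IH1 IH2]]; unfold branch_weights; cbv beta iota.
      - specialize (Hstep 0%nat). rewrite Hr0 in Hstep.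
        split; intro Hr1; rewrite Hr1 in Hstep; intuition lia.
      - specialize (Hstep (S i)).
        split; intro Hr1; [destruct (IH1 Hr1) as [Hri _] | destruct (IH2 Hr1) as [Hri _]];
          rewrite Hri in Hstep; intuition lia. }
    assert (Hr1 : (r 1 = 1 \/ r 1 = 2)%nat)
      by (specialize (Hstep 0%nat); rewrite Hr0 in Hstep; lia).
    destruct Hr1 as [Hr1|Hr1]; [left|right]; eapply is_series_ext; try exact Hs;
      intro i; unfold discounted; f_equal; f_equal; apply Hbranch; exact Hr1.
  - intros [Hs|Hs];
      [exists (fun i => match i with O => 0 | S _ => 1 end)%nat, (branch_weights e1 l1 w)
      |exists (fun i => match i with O => 0 | S _ => 2 end)%nat, (branch_weights e2 l2 w)];
      (split; [reflexivity|split; [|exact Hs]]);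
      intro i; specialize (Hw i); unfold branch_weights, letter_weight;
      destruct i; destruct (w _) as [|[|]]; simpl; try lia; tauto.
Qed.

Lemma two_branch_value lam e1 l1 e2 l2 w x1 x2 : is_word 2 w ->
  is_series (discounted lam (branch_weights e1 l1 w)) x1 ->
  is_series (discounted lam (branch_weights e2 l2 w)) x2 ->
  DSA_value (two_branch_dsa lam e1 l1 e2 l2) w = Finite (Rmin x1 x2).
Proof.
  intros Hw H1 H2. apply Glb_Rbar_pair. intro x. rewrite run_values_two_branch by exact Hw.
  split.
  - intros [Hx|Hx]; [left|right]; eapply is_series_unique in Hx;
      rewrite <- Hx; apply is_series_unique; assumption.
  - intros [->| ->]; [left|right]; assumption.
Qed.

(* Weights for which the two branches of [two_branch_dsa lam e1 l e2 m] are worth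
   [v - t] and [t - v] on a word whose [l]-weighted discounted sum is [v]. *)
Definition gap_weights (t : R) (e1 l e2 m : Q * Q) : Prop :=
  forall s, Q2R (letter_weight e1 s) = Q2R (letter_weight l s) - t /\
            Q2R (letter_weight e2 s) = t - Q2R (letter_weight l s) /\
            Q2R (letter_weight m s) = - Q2R (letter_weight l s).

Lemma gap_value lam t e1 l e2 m w v : gap_weights t e1 l e2 m -> is_word 2 w ->
  is_series (discounted lam (fun i => letter_weight l (w i))) v ->
  DSA_value (two_branch_dsa lam e1 l e2 m) w = Finite (- Rabs (v - t)).
Proof.
  intros Hgap Hw Hv.
  destruct (Hgap (w 0%nat)) as (He1 & He2 & _).
  rewrite (two_branch_value _ _ _ _ _ _ (v - t) (t - v) Hw).
  - f_equal. unfold Rmin, Rabs. destruct Rle_dec, Rcase_abs; lra.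
  - replace (v - t) with (v - discounted lam (fun i => letter_weight l (w i)) 0%nat
                          + discounted lam (branch_weights e1 l w) 0%nat)
      by (unfold discounted, branch_weights; simpl; rewrite He1; ring).
    apply is_series_change_head; [exact Hv|reflexivity].
  - set (u i := - discounted lam (fun i => letter_weight l (w i)) i).
    replace (t - v) with (- v - u 0%nat + discounted lam (branch_weights e2 m w) 0%nat)
      by (unfold u, discounted, branch_weights; simpl; rewrite He2; ring).
    apply is_series_change_head; [exact (is_series_opp _ _ Hv)|].
    intro k. unfold u, discounted, branch_weights; simpl.
    destruct (Hgap (w (S k))) as (_ & _ & ->). ring.
Qed.

Lemma ex_series_pick lam l w :
  0 < Q2R lam < 1 -> ex_series (discounted lam (fun i => letter_weight l (w i))).
Proof.
  intro Hlam. set (M := Rabs (Q2R (fst l)) + Rabs (Q2R (snd l))).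
  apply (@ex_series_le R_AbsRing R_CompleteNormedModule _ (fun i => M * Q2R lam ^ i)).
  - intro i. change (norm _) with (Rabs (discounted lam (fun i => letter_weight l (w i)) i)).
    unfold discounted. rewrite Rabs_mult, (Rabs_pos_eq (Q2R lam ^ i)) by (apply pow_le; lra).
    apply Rmult_le_compat_r; [apply pow_le; lra|].
    unfold M, letter_weight.
    pose proof (Rabs_pos (Q2R (fst l))). pose proof (Rabs_pos (Q2R (snd l))).
    destruct (w i =? 0); lra.
  - assert (Hgeom : Rabs (Q2R lam) < 1) by (rewrite Rabs_pos_eq; lra).
    exact (ex_series_scal_l M _ (ex_series_geom _ Hgeom)).
Qed.

Lemma TDS_iff_word lam t a b : TDS (lam, t, a, b) <->
  exists w, is_word 2 w /\ is_series (discounted lam (fun i => letter_weight (a, b) (w i))) (Q2R t).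
Proof.
  split.
  - intros [c Hc]. exists (fun i => if c i then 0%nat else 1%nat). split.
    + intro i. destruct (c i); lia.
    + eapply is_series_ext; [|exact Hc].
      intro i. unfold discounted, letter_weight. now destruct (c i).
  - intros (w & _ & Hw). exists (fun i => w i =? 0).
    eapply is_series_ext; [|exact Hw]. intro i. reflexivity.
Qed.

Lemma gap_universal lam t e1 a b e2 m : 0 < Q2R lam < 1 -> gap_weights (Q2R t) e1 (a, b) e2 m ->
  (forall w, is_word 2 w -> Rbar_lt (DSA_value (two_branch_dsa lam e1 (a, b) e2 m) w) (Finite 0))
  <-> ~ TDS (lam, t, a, b).
Proof.
  intros Hlam Hgap. rewrite TDS_iff_word. split.
  - intros Hlt (w & Hw & Hv). specialize (Hlt w Hw).
    rewrite (gap_value _ _ _ _ _ _ _ _ Hgap Hw Hv) in Hlt. simpl in Hlt.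
    rewrite Rminus_diag, Rabs_R0 in Hlt. lra.
  - intros Hno w Hw. destruct (ex_series_pick lam (a, b) w Hlam) as [v Hv].
    rewrite (gap_value _ _ _ _ _ _ _ _ Hgap Hw Hv). simpl.
    assert (v <> Q2R t) by (intro E; rewrite E in Hv; eauto).
    assert (0 < Rabs (v - Q2R t)) by (apply Rabs_pos_lt; lra). lra.
Qed.

Lemma zero_dsa_value lam w : 0 < Q2R lam < 1 -> is_word 2 w ->
  DSA_value (two_branch_dsa lam (0, 0) (0, 0) (0, 0) (0, 0))%Q w = Finite 0.
Proof.
  intros Hlam Hw.
  assert (Hzero : forall s, Q2R (letter_weight (0, 0)%Q s) = 0)
    by (intro s; unfold letter_weight; destruct (s =? 0); apply RMicromega.Q2R_0).
  assert (Hgap : gap_weights 0 (0, 0)%Q (0, 0)%Q (0, 0)%Q (0, 0)%Q)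
    by (intro s; rewrite Hzero; lra).
  assert (Hv : is_series (discounted lam (fun i => letter_weight (0, 0)%Q (w i))) 0).
  { assert (Hgeom : is_series (fun i => Q2R lam ^ i) (/ (1 - Q2R lam)))
      by (apply is_series_geom; rewrite Rabs_pos_eq; lra).
    apply (is_series_scal_l 0) in Hgeom.
    change (is_series (fun i => 0 * Q2R lam ^ i) (0 * / (1 - Q2R lam))) in Hgeom.
    rewrite Rmult_0_l in Hgeom.
    eapply is_series_ext; [|exact Hgeom]. intro i. unfold discounted. now rewrite Hzero. }
  rewrite (gap_value _ _ _ _ _ _ _ _ Hgap Hw Hv), Rminus_diag, Rabs_R0, Ropp_0.
  reflexivity.
Qed.

(** * Partial recursive programs with certified semantics *)

Local Open Scope nat_scope.

Record prog (k : nat) := Prog {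
  code : recf;
  sem : list nat -> nat;
  code_sem : forall xs, length xs = k -> reval code xs (sem xs) }.
Arguments Prog {k}.
Arguments code {k}.
Arguments sem {k}.
Arguments code_sem {k}.

Definition pproj (k i : nat) (H : (i <? k) = true) : prog k.
Proof.
  refine (Prog (RProj i) (fun xs => nth i xs 0) _).
  intros xs Hl. constructor. apply Nat.ltb_lt in H. lia.
Defined.

Definition pzero (k : nat) : prog k := Prog RZero (fun _ => 0) (fun xs _ => ev_zero xs).

Definition psucc {k} (A : prog k) : prog k.
Proof.
  refine (Prog (RComp RSucc [code A]) (fun xs => S (sem A xs)) _).
  intros xs Hl. econstructor; [repeat constructor; apply (code_sem A xs Hl)|constructor].
Defined.

Definition pcomp1 {k} (F : prog 1) (A : prog k) : prog k.
Proof.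
  refine (Prog (RComp (code F) [code A]) (fun xs => sem F [sem A xs]) _).
  intros xs Hl. econstructor; [repeat constructor; apply (code_sem A xs Hl)|].
  apply (code_sem F). reflexivity.
Defined.

Definition pcomp2 {k} (F : prog 2) (A B : prog k) : prog k.
Proof.
  refine (Prog (RComp (code F) [code A; code B]) (fun xs => sem F [sem A xs; sem B xs]) _).
  intros xs Hl. econstructor.
  - repeat constructor; [apply (code_sem A xs Hl)|apply (code_sem B xs Hl)].
  - apply (code_sem F). reflexivity.
Defined.

Definition prim_sem {k} (F : prog k) (G : prog (S (S k))) (xs : list nat) : nat :=
  match xs with
  | [] => 0
  | n :: ys => nat_rect (fun _ => nat) (sem F ys) (fun m acc => sem G (m :: acc :: ys)) n
  end.

Definition pprim {k} (F : prog k) (G : prog (S (S k))) : prog (S k).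
Proof.
  refine (Prog (RPrim (code F) (code G)) (prim_sem F G) _).
  intros [|n ys] Hl; [discriminate|]. injection Hl as Hl.
  induction n as [|n IH]; simpl.
  - constructor. apply (code_sem F ys Hl).
  - econstructor; [apply IH|]. apply (code_sem G). simpl. lia.
Defined.

Fixpoint pconst (k c : nat) : prog k :=
  match c with O => pzero k | S c' => psucc (pconst k c') end.

Lemma pconst_sem k c xs : sem (pconst k c) xs = c.
Proof. induction c; simpl; auto. Qed.

Definition padd : prog 2 := pprim (pproj 1 0 eq_refl) (psucc (pproj 3 1 eq_refl)).

Lemma padd_sem x y : sem padd [x; y] = x + y.
Proof. induction x; simpl; auto. Qed.

Definition ppred : prog 1 := pprim (pzero 0) (pproj 2 0 eq_refl).

Lemma ppred_sem x : sem ppred [x] = pred x.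
Proof. destruct x; reflexivity. Qed.

Definition psub : prog 2 :=
  pcomp2 (pprim (pproj 1 0 eq_refl) (pcomp1 ppred (pproj 3 1 eq_refl)))
    (pproj 2 1 eq_refl) (pproj 2 0 eq_refl).

Lemma psub_sem x y : sem psub [x; y] = x - y.
Proof.
  induction y as [|y IH]; simpl in *; [lia|].
  rewrite IH. destruct (x - y) eqn:E; simpl; lia.
Qed.

Lemma decidable_on_compl_reduction {X Y : Type} (decX : nat -> X) (decY : nat -> Y)
    (DX PX : X -> Prop) (DY PY : Y -> Prop) (h : prog 1) :
  (forall n, DX (decX n) ->
     DY (decY (sem h [n])) /\ (PY (decY (sem h [n])) <-> ~ PX (decX n))) ->
  decidable_on decY DY PY -> decidable_on decX DX PX.
Proof.
  intros Hred [f Hf]. exists (RComp (code psub) [code (pconst 1 1); RComp f [code h]]).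
  intros n Hn. destruct (Hred n Hn) as [HDY Hiff]. destruct (Hf _ HDY) as [Hyes Hno].
  assert (Hneg : forall y, reval f [sem h [n]] y ->
            reval (RComp (code psub) [code (pconst 1 1); RComp f [code h]]) [n] (1 - y)).
  { intros y Hy. econstructor.
    - constructor; [apply (code_sem (pconst 1 1)); reflexivity|].
      constructor; [|constructor].
      econstructor; [constructor; [apply code_sem; reflexivity|constructor]|exact Hy].
    - rewrite <- psub_sem. apply code_sem. reflexivity. }
  split; intro HP; [apply (Hneg 0), Hno | apply (Hneg 1), Hyes]; tauto.
Qed.

Definition pmul : prog 2 :=
  pprim (pzero 1) (pcomp2 padd (pproj 3 1 eq_refl) (pproj 3 2 eq_refl)).

Lemma pmul_sem x y : sem pmul [x; y] = x * y.
Proof.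
  induction x as [|x IH]; [reflexivity|].
  change (sem padd [sem pmul [x; y]; y] = S x * y). rewrite IH, padd_sem. lia.
Qed.

Hint Rewrite pconst_sem padd_sem ppred_sem psub_sem pmul_sem : prog_sem.

Ltac simpl_sem :=
  cbn [sem pcomp1 pcomp2 psucc pproj pzero nth]; autorewrite with prog_sem.

Definition pmod2 : prog 1 :=
  pprim (pzero 0) (pcomp2 psub (pconst 2 1) (pproj 2 1 eq_refl)).

Lemma pmod2_sem x : sem pmod2 [x] = x mod 2.
Proof.
  induction x as [|x IH]; [reflexivity|].
  change (sem (pcomp2 psub (pconst 2 1) (pproj 2 1 eq_refl)) [x; sem pmod2 [x]] = S x mod 2).
  simpl_sem. rewrite IH.
  pose proof (Nat.div_mod_eq x 2). pose proof (Nat.div_mod_eq (S x) 2).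
  pose proof (Nat.mod_upper_bound x 2). pose proof (Nat.mod_upper_bound (S x) 2). lia.
Qed.

Definition pdiv2 : prog 1 :=
  pprim (pzero 0) (pcomp2 padd (pproj 2 1 eq_refl) (pcomp1 pmod2 (pproj 2 0 eq_refl))).

Lemma pdiv2_sem x : sem pdiv2 [x] = x / 2.
Proof.
  induction x as [|x IH]; [reflexivity|].
  change (sem (pcomp2 padd (pproj 2 1 eq_refl) (pcomp1 pmod2 (pproj 2 0 eq_refl)))
            [x; sem pdiv2 [x]] = S x / 2).
  simpl_sem. rewrite pmod2_sem, IH.
  pose proof (Nat.div_mod_eq x 2). pose proof (Nat.div_mod_eq (S x) 2).
  pose proof (Nat.mod_upper_bound x 2). pose proof (Nat.mod_upper_bound (S x) 2). lia.
Qed.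

Fixpoint triangle (n : nat) : nat := match n with O => O | S m => triangle m + S m end.

Definition ptriangle : prog 1 :=
  pprim (pzero 0) (pcomp2 padd (pproj 2 1 eq_refl) (psucc (pproj 2 0 eq_refl))).

Lemma ptriangle_sem x : sem ptriangle [x] = triangle x.
Proof.
  induction x as [|x IH]; [reflexivity|].
  change (sem (pcomp2 padd (pproj 2 1 eq_refl) (psucc (pproj 2 0 eq_refl)))
            [x; sem ptriangle [x]] = triangle (S x)).
  simpl_sem. rewrite IH. reflexivity.
Qed.

Hint Rewrite pmod2_sem pdiv2_sem ptriangle_sem : prog_sem.

(** * Cantor pairing *)

Definition cantor_pair (x y : nat) : nat := triangle (x + y) + y.

Definition ppair : prog 2 :=
  pcomp2 padd (pcomp1 ptriangle (pcomp2 padd (pproj 2 0 eq_refl) (pproj 2 1 eq_refl)))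
    (pproj 2 1 eq_refl).

Lemma ppair_sem x y : sem ppair [x; y] = cantor_pair x y.
Proof. unfold ppair. simpl_sem. reflexivity. Qed.

Hint Rewrite ppair_sem : prog_sem.

Lemma triangle_double n : triangle n * 2 = n * (n + 1).
Proof. induction n; simpl; lia. Qed.

Lemma triangle_le a b : a <= b -> triangle a <= triangle b.
Proof. induction 1; simpl; lia. Qed.

Definition cantor_diag (n : nat) : nat := (Nat.sqrt (8 * n + 1) - 1) / 2.

Lemma cantor_diag_spec n : triangle (cantor_diag n) <= n < triangle (S (cantor_diag n)).
Proof.
  unfold cantor_diag. set (r := Nat.sqrt (8 * n + 1)).
  pose proof (Nat.sqrt_spec (8 * n + 1) ltac:(lia)) as [H1 H2]. fold r in H1, H2.
  assert (r >= 1) by (destruct r; simpl in *; lia).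
  pose proof (Nat.div_mod (r - 1) 2 ltac:(lia)).
  pose proof (Nat.mod_upper_bound (r - 1) 2 ltac:(lia)).
  set (w := (r - 1) / 2) in *. set (e := (r - 1) mod 2) in *.
  pose proof (triangle_double w). pose proof (triangle_double (S w)).
  split; nia.
Qed.

Lemma cantor_diag_unique s n : triangle s <= n < triangle (S s) -> cantor_diag n = s.
Proof.
  intros [H1 H2]. pose proof (cantor_diag_spec n) as [H3 H4].
  destruct (Nat.lt_trichotomy (cantor_diag n) s) as [Hl|[He|Hl]]; auto.
  - pose proof (triangle_le (S (cantor_diag n)) s Hl). lia.
  - pose proof (triangle_le (S s) (cantor_diag n) Hl). lia.
Qed.

Lemma unpair_diag n :
  unpair n = (cantor_diag n - (n - triangle (cantor_diag n)), n - triangle (cantor_diag n)).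
Proof.
  unfold unpair. fold (cantor_diag n).
  replace (cantor_diag n * (cantor_diag n + 1) / 2) with (triangle (cantor_diag n)); [reflexivity|].
  rewrite <- triangle_double. symmetry. apply Nat.div_mul. lia.
Qed.

Lemma unpair_pair x y : unpair (cantor_pair x y) = (x, y).
Proof.
  rewrite unpair_diag. unfold cantor_pair.
  rewrite (cantor_diag_unique (x + y)) by (simpl; lia). f_equal; lia.
Qed.

Definition povershoot : prog 2 :=
  pcomp2 psub (psucc (pproj 2 1 eq_refl)) (pcomp1 ptriangle (psucc (pproj 2 0 eq_refl))).

Lemma povershoot_sem s n : sem povershoot [s; n] = S n - triangle (S s).
Proof. unfold povershoot. simpl_sem. reflexivity. Qed.

(* [cantor_diag n] is the least [s] at which [povershoot] vanishes. *)
Definition pdiag : prog 1.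
Proof.
  refine (Prog (RMu (code povershoot)) (fun xs => cantor_diag (nth 0 xs 0)) _).
  intros [|n [|]] Hl; try discriminate. simpl.
  pose proof (cantor_diag_spec n) as [H1 H2].
  constructor.
  - pose proof (code_sem povershoot [cantor_diag n; n] eq_refl) as H. rewrite povershoot_sem in H.
    replace (S n - triangle (S (cantor_diag n))) with 0 in H by lia. exact H.
  - intros m Hm. exists (pred (S n - triangle (S m))).
    pose proof (code_sem povershoot [m; n] eq_refl) as H. rewrite povershoot_sem in H.
    pose proof (triangle_le (S m) (cantor_diag n) Hm).
    replace (S (pred (S n - triangle (S m)))) with (S n - triangle (S m)) by lia. exact H.
Defined.

Lemma pdiag_sem n : sem pdiag [n] = cantor_diag n.
Proof. reflexivity. Qed.

Hint Rewrite pdiag_sem : prog_sem.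

Definition psnd : prog 1 := pcomp2 psub (pproj 1 0 eq_refl) (pcomp1 ptriangle pdiag).
Definition pfst : prog 1 := pcomp2 psub pdiag psnd.

Lemma psnd_sem n : sem psnd [n] = snd (unpair n).
Proof. unfold psnd. simpl_sem. rewrite unpair_diag. reflexivity. Qed.

Lemma pfst_sem n : sem pfst [n] = fst (unpair n).
Proof. unfold pfst. simpl_sem. rewrite psnd_sem, unpair_diag. reflexivity. Qed.

Hint Rewrite pfst_sem psnd_sem : prog_sem.

(** * Codes of rationals and automata *)

Definition zpos (a : nat) : nat := a / 2 * (1 - a mod 2).
Definition zneg (a : nat) : nat := S a / 2 * (a mod 2).

Lemma decZ_even k : decZ (2 * k) = Z.of_nat k.
Proof. unfold decZ. rewrite Nat.even_even, Nat.mul_comm, Nat.div_mul by lia. reflexivity. Qed.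

Lemma decZ_odd k : decZ (2 * k + 1) = (- Z.of_nat (S k))%Z.
Proof.
  unfold decZ. rewrite Nat.even_odd. replace (2 * k + 1 + 1) with (S k * 2) by lia.
  rewrite Nat.div_mul by lia. reflexivity.
Qed.

Lemma decZ_pos_neg a : decZ a = (Z.of_nat (zpos a) - Z.of_nat (zneg a))%Z.
Proof.
  unfold zpos, zneg. destruct (Nat.Even_or_Odd a) as [[k ->]|[k ->]].
  - rewrite decZ_even, <- (Nat.div_unique (2 * k) 2 k 0), <- (Nat.mod_unique (2 * k) 2 k 0)
      by lia.
    lia.
  - rewrite decZ_odd, <- (Nat.div_unique (S (2 * k + 1)) 2 (S k) 0),
      <- (Nat.mod_unique (2 * k + 1) 2 k 1) by lia.
    lia.
Qed.

(* A code of the integer [P - N]: one of the two summands vanishes by truncated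
   subtraction. *)
Definition zcode (P N : nat) : nat := 2 * (P - N) + (2 * (N - P) - 1).

Lemma decZ_zcode P N : decZ (zcode P N) = (Z.of_nat P - Z.of_nat N)%Z.
Proof.
  unfold zcode. destruct (Nat.le_gt_cases N P).
  - replace (2 * (P - N) + (2 * (N - P) - 1)) with (2 * (P - N)) by lia.
    rewrite decZ_even. lia.
  - replace (2 * (P - N) + (2 * (N - P) - 1)) with (2 * (N - P - 1) + 1) by lia.
    rewrite decZ_odd. lia.
Qed.

(* The numerator of [decQ x - decQ y] over the denominator [(bx + 1) (by_ + 1)],
   with [decZ ax] and [decZ ay] split into their positive and negative parts. *)
Definition qsub_code (x y : nat) : nat :=
  let (ax, bx) := unpair x in
  let (ay, by_) := unpair y in
  cantor_pair (zcode (zpos ax * S by_ + zneg ay * S bx) (zneg ax * S by_ + zpos ay * S bx))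
    (pred (S bx * S by_)).

Lemma decQ_qsub_code x y : (decQ (qsub_code x y) == decQ x - decQ y)%Q.
Proof.
  unfold qsub_code, decQ. destruct (unpair x) as [ax bx], (unpair y) as [ay by_].
  rewrite unpair_pair, decZ_zcode, !decZ_pos_neg.
  unfold Qeq, Qminus, Qplus, Qopp. simpl.
  rewrite !Pos2Z.inj_mul, !Znat.Zpos_P_of_succ_nat.
  replace (S (bx + by_ * S bx)) with (S bx * S by_) by lia.
  rewrite !Nat2Z.inj_add, !Nat2Z.inj_mul, !Nat2Z.inj_succ. ring.
Qed.

Lemma Q2R_decQ_qsub_code x y :
  Q2R (decQ (qsub_code x y)) = (Q2R (decQ x) - Q2R (decQ y))%R.
Proof. rewrite (Qeq_eqR _ _ (decQ_qsub_code x y)). apply Q2R_minus. Qed.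

Definition pzpos : prog 1 :=
  pcomp2 pmul (pcomp1 pdiv2 (pproj 1 0 eq_refl))
    (pcomp2 psub (pconst 1 1) (pcomp1 pmod2 (pproj 1 0 eq_refl))).

Definition pzneg : prog 1 :=
  pcomp2 pmul (pcomp1 pdiv2 (psucc (pproj 1 0 eq_refl))) (pcomp1 pmod2 (pproj 1 0 eq_refl)).

Definition pzcode : prog 2 :=
  pcomp2 padd (pcomp2 pmul (pconst 2 2) (pcomp2 psub (pproj 2 0 eq_refl) (pproj 2 1 eq_refl)))
    (pcomp2 psub (pcomp2 pmul (pconst 2 2) (pcomp2 psub (pproj 2 1 eq_refl) (pproj 2 0 eq_refl)))
       (pconst 2 1)).

Lemma pzpos_sem a : sem pzpos [a] = zpos a.
Proof. unfold pzpos. simpl_sem. reflexivity. Qed.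

Lemma pzneg_sem a : sem pzneg [a] = zneg a.
Proof. unfold pzneg. simpl_sem. reflexivity. Qed.

Lemma pzcode_sem P N : sem pzcode [P; N] = zcode P N.
Proof. unfold pzcode. simpl_sem. reflexivity. Qed.

Hint Rewrite pzpos_sem pzneg_sem pzcode_sem : prog_sem.

Definition pqsub : prog 2 :=
  let ax := pcomp1 pfst (pproj 2 0 eq_refl) in let bx := pcomp1 psnd (pproj 2 0 eq_refl) in
  let ay := pcomp1 pfst (pproj 2 1 eq_refl) in let by_ := pcomp1 psnd (pproj 2 1 eq_refl) in
  pcomp2 ppair
    (pcomp2 pzcode
       (pcomp2 padd (pcomp2 pmul (pcomp1 pzpos ax) (psucc by_))
          (pcomp2 pmul (pcomp1 pzneg ay) (psucc bx)))
       (pcomp2 padd (pcomp2 pmul (pcomp1 pzneg ax) (psucc by_))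
          (pcomp2 pmul (pcomp1 pzpos ay) (psucc bx))))
    (pcomp1 ppred (pcomp2 pmul (psucc bx) (psucc by_))).

Lemma pqsub_sem x y : sem pqsub [x; y] = qsub_code x y.
Proof.
  unfold pqsub, qsub_code. simpl_sem.
  destruct (unpair x), (unpair y). reflexivity.
Qed.

Hint Rewrite pqsub_sem : prog_sem.

Lemma decList_fuel_enough {A} (d : nat -> A) f1 f2 n :
  n <= f1 -> n <= f2 -> decList_fuel d f1 n = decList_fuel d f2 n.
Proof.
  revert f2 n. induction f1 as [|f1 IH]; intros [|f2] n H1 H2;
    try (replace n with 0 by lia; reflexivity).
  destruct n as [|m]; [reflexivity|]. simpl.
  assert (Hb : snd (unpair m) <= m) by (rewrite unpair_diag; simpl; lia).
  destruct (unpair m) as [a b]. simpl in Hb. f_equal. apply IH; lia.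
Qed.

Definition list_code (l : list nat) : nat := fold_right (fun a c => S (cantor_pair a c)) 0 l.

Lemma decList_list_code {A} (d : nat -> A) l : decList d (list_code l) = map d l.
Proof.
  induction l as [|a l IH]; [reflexivity|].
  unfold decList, list_code in *. cbn [fold_right decList_fuel map]. rewrite unpair_pair.
  f_equal. rewrite <- IH. apply decList_fuel_enough; unfold cantor_pair; lia.
Qed.

Definition trans_code (p s q g : nat) : nat := cantor_pair (cantor_pair p s) (cantor_pair q g).

Definition dsa_code (k m i : nat) (ts : list nat) (lam : nat) : nat :=
  cantor_pair (cantor_pair k m) (cantor_pair i (cantor_pair (list_code ts) lam)).

Definition decQ2 (e : nat * nat) : Q * Q := (decQ (fst e), decQ (snd e)).

Definition two_branch_code (lam : nat) (e1 l1 e2 l2 : nat * nat) : nat :=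
  dsa_code 2 3 0
    [trans_code 0 0 1 (fst e1); trans_code 0 1 1 (snd e1);
     trans_code 1 0 1 (fst l1); trans_code 1 1 1 (snd l1);
     trans_code 0 0 2 (fst e2); trans_code 0 1 2 (snd e2);
     trans_code 2 0 2 (fst l2); trans_code 2 1 2 (snd l2)] lam.

Lemma decDSA_two_branch_code lam e1 l1 e2 l2 :
  decDSA (two_branch_code lam e1 l1 e2 l2) =
  two_branch_dsa (decQ lam) (decQ2 e1) (decQ2 l1) (decQ2 e2) (decQ2 l2).
Proof.
  unfold two_branch_code, dsa_code, decDSA. rewrite !unpair_pair, decList_list_code.
  unfold trans_code. cbn [map]. rewrite !unpair_pair. reflexivity.
Qed.

Fixpoint plist (ts : list (prog 1)) : prog 1 :=
  match ts with
  | [] => pzero 1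
  | t :: ts' => psucc (pcomp2 ppair t (plist ts'))
  end.

Lemma plist_sem ts n : sem (plist ts) [n] = list_code (map (fun t => sem t [n]) ts).
Proof.
  induction ts as [|t ts IH]; [reflexivity|].
  cbn [plist]. simpl_sem. rewrite IH. reflexivity.
Qed.

Definition ptrans (p s q : nat) (g : prog 1) : prog 1 :=
  pcomp2 ppair (pconst 1 (cantor_pair p s)) (pcomp2 ppair (pconst 1 q) g).

Lemma ptrans_sem p s q g n : sem (ptrans p s q g) [n] = trans_code p s q (sem g [n]).
Proof. unfold ptrans. simpl_sem. reflexivity. Qed.

Definition sem2 (e : prog 1 * prog 1) (n : nat) : nat * nat := (sem (fst e) [n], sem (snd e) [n]).

Definition ptwo_branch (lam : prog 1) (e1 l1 e2 l2 : prog 1 * prog 1) : prog 1 :=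
  pcomp2 ppair (pconst 1 (cantor_pair 2 3))
    (pcomp2 ppair (pconst 1 0)
       (pcomp2 ppair
          (plist [ptrans 0 0 1 (fst e1); ptrans 0 1 1 (snd e1);
                  ptrans 1 0 1 (fst l1); ptrans 1 1 1 (snd l1);
                  ptrans 0 0 2 (fst e2); ptrans 0 1 2 (snd e2);
                  ptrans 2 0 2 (fst l2); ptrans 2 1 2 (snd l2)])
          lam)).

Lemma ptwo_branch_sem lam e1 l1 e2 l2 n :
  sem (ptwo_branch lam e1 l1 e2 l2) [n] =
  two_branch_code (sem lam [n]) (sem2 e1 n) (sem2 l1 n) (sem2 e2 n) (sem2 l2 n).
Proof.
  unfold ptwo_branch. simpl_sem. rewrite plist_sem. cbn [map]. rewrite !ptrans_sem.
  reflexivity.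
Qed.

(** * The reductions *)

Definition tds_lam (n : nat) : nat := fst (unpair (fst (unpair n))).
Definition tds_target (n : nat) : nat := snd (unpair (fst (unpair n))).
Definition tds_a (n : nat) : nat := fst (unpair (snd (unpair n))).
Definition tds_b (n : nat) : nat := snd (unpair (snd (unpair n))).

Lemma decTDS_parts n :
  decTDS n = (decQ (tds_lam n), decQ (tds_target n), decQ (tds_a n), decQ (tds_b n)).
Proof.
  unfold decTDS, tds_lam, tds_target, tds_a, tds_b.
  destruct (unpair n) as [x y]. simpl. destruct (unpair x), (unpair y). reflexivity.
Qed.

Definition gap_code (n : nat) : nat :=
  let t := tds_target n in let a := tds_a n in let b := tds_b n in
  two_branch_code (tds_lam n) (qsub_code a t, qsub_code b t) (a, b)
    (qsub_code t a, qsub_code t b) (qsub_code 0 a, qsub_code 0 b).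

Definition zero_code (n : nat) : nat := two_branch_code (tds_lam n) (0, 0) (0, 0) (0, 0) (0, 0).

Definition pgap : prog 1 :=
  let arg := pproj 1 0 eq_refl in
  let t := pcomp1 psnd (pcomp1 pfst arg) in
  let a := pcomp1 pfst (pcomp1 psnd arg) in
  let b := pcomp1 psnd (pcomp1 psnd arg) in
  ptwo_branch (pcomp1 pfst (pcomp1 pfst arg))
    (pcomp2 pqsub a t, pcomp2 pqsub b t) (a, b)
    (pcomp2 pqsub t a, pcomp2 pqsub t b) (pcomp2 pqsub (pzero 1) a, pcomp2 pqsub (pzero 1) b).

Lemma pgap_sem n : sem pgap [n] = gap_code n.
Proof.
  unfold pgap. rewrite ptwo_branch_sem. unfold sem2. cbn [fst snd]. simpl_sem.
  unfold gap_code, tds_lam, tds_target, tds_a, tds_b. reflexivity.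
Qed.

Definition pzero_dsa : prog 1 :=
  ptwo_branch (pcomp1 pfst (pcomp1 pfst (pproj 1 0 eq_refl)))
    (pzero 1, pzero 1) (pzero 1, pzero 1) (pzero 1, pzero 1) (pzero 1, pzero 1).

Lemma pzero_dsa_sem n : sem pzero_dsa [n] = zero_code n.
Proof.
  unfold pzero_dsa. rewrite ptwo_branch_sem. unfold sem2. cbn [fst snd]. simpl_sem.
  unfold zero_code, tds_lam. reflexivity.
Qed.

Lemma decQ_0 : decQ 0 = 0%Q.
Proof. vm_compute. reflexivity. Qed.

Lemma gap_code_weights t a b :
  gap_weights (Q2R (decQ t)) (decQ2 (qsub_code a t, qsub_code b t)) (decQ a, decQ b)
    (decQ2 (qsub_code t a, qsub_code t b)) (decQ2 (qsub_code 0 a, qsub_code 0 b)).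
Proof.
  intro s. unfold letter_weight, decQ2. cbn [fst snd].
  destruct (s =? 0); rewrite !Q2R_decQ_qsub_code, decQ_0, RMicromega.Q2R_0; lra.
Qed.

Definition puniv : prog 1 := pcomp2 ppair pgap (pzero 1).
Definition pincl : prog 1 := pcomp2 ppair pgap pzero_dsa.

Lemma univ_reduction n : TDS_dom (decTDS n) ->
  univ_dom (decUniv (sem puniv [n])) /\
  (lt_universal (decUniv (sem puniv [n])) <-> ~ TDS (decTDS n)).
Proof.
  rewrite decTDS_parts. intro Hlam.
  unfold puniv. cbn [sem pcomp2 pzero]. rewrite pgap_sem, ppair_sem.
  unfold decUniv. rewrite unpair_pair. unfold gap_code. rewrite decDSA_two_branch_code.
  split; [apply two_branch_dsa_wf, Hlam|].
  unfold lt_universal. rewrite decQ_0, RMicromega.Q2R_0.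
  change (decQ2 (tds_a n, tds_b n)) with (decQ (tds_a n), decQ (tds_b n)).
  apply gap_universal; [exact Hlam|apply gap_code_weights].
Qed.

Lemma incl_reduction n : TDS_dom (decTDS n) ->
  incl_dom (decIncl (sem pincl [n])) /\
  (lt_inclusion (decIncl (sem pincl [n])) <-> ~ TDS (decTDS n)).
Proof.
  rewrite decTDS_parts. intro Hlam.
  unfold pincl. cbn [sem pcomp2]. rewrite pgap_sem, pzero_dsa_sem, ppair_sem.
  unfold decIncl. rewrite unpair_pair. unfold gap_code, zero_code.
  rewrite !decDSA_two_branch_code.
  split; [split; [|split]; [apply two_branch_dsa_wf, Hlam..|reflexivity]|].
  change (decQ2 (0, 0)) with (0%Q, 0%Q).
  change (decQ2 (tds_a n, tds_b n)) with (decQ (tds_a n), decQ (tds_b n)).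
  rewrite <- (gap_universal _ _ _ _ _ _ _ Hlam (gap_code_weights _ _ _)).
  unfold lt_inclusion.
  split; intros H w Hw; specialize (H w Hw); rewrite zero_dsa_value in *; assumption.
Qed.

Theorem theorem29 :
  ~ decidable_on decTDS TDS_dom TDS ->
  ~ decidable_on decUniv univ_dom lt_universal /\
  ~ decidable_on decIncl incl_dom lt_inclusion.
Proof.
  intros Hundec. split; intro Hdec; apply Hundec.
  - exact (decidable_on_compl_reduction _ _ _ _ _ _ puniv univ_reduction Hdec).
  - exact (decidable_on_compl_reduction _ _ _ _ _ _ pincl incl_reduction Hdec).
Qed.
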